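(* Let $(X,T)$ be a topological dynamical system. If $(X,T)$ is multi-sensitive then it is thickly sensitive. If moreover $(X,T)$ is topologically transitive, then $(X,T)$ is thickly sensitive if and only if it is multi-sensitive.
   Context: A topological dynamical system $(X,T)$: $(X,\varrho)$ compact metric, $T:X\to X$ continuous surjection. For opene (open nonempty) $U\subset X$ and $\delta>0$, $S_T(U,\delta)=\{n\in\mathbb{N}:\exists x_1,x_2\in U,\ \varrho(T^nx_1,T^nx_2)>\delta\}$. A set $\mathcal S\subset\mathbb N$ is thick if for each $k$ there is $n_k$ with $\{n_k,\dots,n_k+k\}\subset\mathcal S$. $(X,T)$ is thickly sensitive if there is $\delta>0$ with $S_T(U,\delta)$ thick for every opene $U$; multi-sensitive if there is $\delta>0$ such that $\bigcap_{i=1}^k S_T(U_i,\delta)\neq\varnothing$ for every finite collection $U_1,\dots,U_k$ of opene subsets. $(X,T)$ is transitive if for all opene $U_1,U_2$ there is $n\in\mathbb N$ with $U_1\cap T^{-n}U_2\ne\varnothing$. *)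

From Stdlib Require Import Reals List.
Open Scope R_scope.

Record is_metric (X : Type) (d : X -> X -> R) : Prop := {
  metric_nonneg : forall x y, 0 <= d x y;
  metric_refl : forall x, d x x = 0;
  metric_sep : forall x y, d x y = 0 -> x = y;
  metric_sym : forall x y, d x y = d y x;
  metric_tri : forall x y z, d x z <= d x y + d y z
}.

Definition is_open {X : Type} (d : X -> X -> R) (U : X -> Prop) : Prop :=
  forall x, U x -> exists eps, 0 < eps /\ forall y, d x y < eps -> U y.

Definition opene {X : Type} (d : X -> X -> R) (U : X -> Prop) : Prop :=
  is_open d U /\ exists x, U x.

Definition is_compact {X : Type} (d : X -> X -> R) : Prop :=
  forall (I : Type) (F : I -> X -> Prop),
    (forall i, is_open d (F i)) ->
    (forall x, exists i, F i x) ->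
    exists l : list I, forall x, exists i, In i l /\ F i x.

Definition is_continuous {X : Type} (d : X -> X -> R) (T : X -> X) : Prop :=
  forall x eps, 0 < eps ->
    exists del, 0 < del /\ forall y, d x y < del -> d (T x) (T y) < eps.

Definition is_surjective {X : Type} (T : X -> X) : Prop :=
  forall y, exists x, T x = y.

Definition TDS {X : Type} (d : X -> X -> R) (T : X -> X) : Prop :=
  is_metric X d /\ is_compact d /\ is_continuous d T /\ is_surjective T.

Definition S_T {X : Type} (d : X -> X -> R) (T : X -> X)
  (U : X -> Prop) (delta : R) (n : nat) : Prop :=
  (1 <= n)%nat /\
  exists x1 x2, U x1 /\ U x2 /\ d (Nat.iter n T x1) (Nat.iter n T x2) > delta.

Definition thick (S : nat -> Prop) : Prop :=
  forall k : nat, exists nk : nat, forall j : nat, (j <= k)%nat -> S (nk + j)%nat.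

Definition thickly_sensitive {X : Type} (d : X -> X -> R) (T : X -> X) : Prop :=
  exists delta, 0 < delta /\
    forall U, opene d U -> thick (S_T d T U delta).

Definition multi_sensitive {X : Type} (d : X -> X -> R) (T : X -> X) : Prop :=
  exists delta, 0 < delta /\
    forall Us : list (X -> Prop),
      Us <> nil ->
      (forall U, In U Us -> opene d U) ->
      exists n, forall U, In U Us -> S_T d T U delta n.

Definition transitive {X : Type} (d : X -> X -> R) (T : X -> X) : Prop :=
  forall U1 U2, opene d U1 -> opene d U2 ->
    exists n : nat, (1 <= n)%nat /\ exists x, U1 x /\ U2 (Nat.iter n T x).

From Stdlib Require Import Reals List.
From Stdlib Require Import Lra Lia Arith.
Open Scope R_scope.

(* Multi-sensitivity gives thick sensitivity: given an opene U, a point x0 of U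
   and k, apply multi-sensitivity to a ball around x0 so small that the first k
   iterates of its points stay delta/2-close to those of x0, together with the
   preimages T^-j U for j <= k.  A common time n of separation then exceeds k,
   and n - j lies in S_T(U, delta) for every j <= k.

   Conversely, under transitivity, shrinking repeatedly yields an opene V and a
   bound K such that every U_i of a finite family satisfies T^t_i V <= U_i with
   t_i <= K.  A block a, ..., a + K in S_T(V, delta) then gives a common time a
   in every S_T(U_i, delta). *)

Section TopologicalDynamics.

Variables (X : Type) (d : X -> X -> R).

Lemma continuous_comp (f g : X -> X) :
  is_continuous d f -> is_continuous d g -> is_continuous d (fun x => g (f x)).
Proof.
  intros Hf Hg x eps Heps.
  destruct (Hg (f x) eps Heps) as [del1 [Hdel1 Hg1]].
  destruct (Hf x del1 Hdel1) as [del2 [Hdel2 Hf2]].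
  exists del2; split; auto.
Qed.

Lemma continuous_iter (T : X -> X) (n : nat) :
  is_continuous d T -> is_continuous d (Nat.iter n T).
Proof.
  intros HT; induction n as [|n IH].
  - intros x eps Heps; exists eps; split; auto.
  - exact (continuous_comp _ _ IH HT).
Qed.

Lemma surjective_iter (T : X -> X) (n : nat) :
  is_surjective T -> is_surjective (Nat.iter n T).
Proof.
  intros HT; induction n as [|n IH]; intros y.
  - exists y; reflexivity.
  - destruct (HT y) as [z <-]. destruct (IH z) as [x <-].
    exists x; reflexivity.
Qed.

Lemma open_preimage (f : X -> X) (U : X -> Prop) :
  is_continuous d f -> is_open d U -> is_open d (fun x => U (f x)).
Proof.
  intros Hf HU x Hx.
  destruct (HU _ Hx) as [eps [Heps HUeps]].
  destruct (Hf x eps Heps) as [del [Hdel Hfdel]].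
  exists del; split; auto.
Qed.

Lemma open_and (U V : X -> Prop) :
  is_open d U -> is_open d V -> is_open d (fun x => U x /\ V x).
Proof.
  intros HU HV x [Hu Hv].
  destruct (HU _ Hu) as [e1 [He1 HU1]].
  destruct (HV _ Hv) as [e2 [He2 HV2]].
  exists (Rmin e1 e2); split.
  - apply Rmin_glb_lt; auto.
  - intros y Hy; split; [apply HU1 | apply HV2];
      eapply Rlt_le_trans; eauto; [apply Rmin_l | apply Rmin_r].
Qed.

Lemma opene_ball (x0 : X) (r : R) :
  is_metric X d -> 0 < r -> opene d (fun y => d x0 y < r).
Proof.
  intros Hm Hr; split.
  - intros y Hy. exists (r - d x0 y); split; [lra|].
    intros z Hz. pose proof (metric_tri _ _ Hm x0 y z). lra.
  - exists x0. rewrite (metric_refl _ _ Hm). exact Hr.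
Qed.

Lemma iter_uniformly_close (T : X -> X) (x0 : X) (eps : R) (k : nat) :
  is_continuous d T -> 0 < eps ->
  exists r, 0 < r /\ forall y, d x0 y < r -> forall i, (i <= k)%nat ->
    d (Nat.iter i T x0) (Nat.iter i T y) < eps.
Proof.
  intros HT Heps; induction k as [|k IH].
  - exists eps; split; auto. intros y Hy i Hi. replace i with 0%nat by lia. exact Hy.
  - destruct IH as [r [Hr Hclose]].
    destruct (continuous_iter T (S k) HT x0 eps Heps) as [del [Hdel Hlast]].
    exists (Rmin r del); split; [apply Rmin_glb_lt; auto|].
    intros y Hy i Hi.
    destruct (Nat.eq_dec i (S k)) as [->|Hne].
    + apply Hlast. eapply Rlt_le_trans; eauto; apply Rmin_r.
    + apply Hclose; [eapply Rlt_le_trans; eauto; apply Rmin_l | lia].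
Qed.

Lemma S_T_late (T : X -> X) (V : X -> Prop) (x0 : X) (delta : R) (k n : nat) :
  is_metric X d ->
  (forall y, V y -> forall i, (i <= k)%nat ->
     d (Nat.iter i T x0) (Nat.iter i T y) < delta / 2) ->
  S_T d T V delta n -> (k < n)%nat.
Proof.
  intros Hm Hclose [_ [y1 [y2 [Hy1 [Hy2 Hsep]]]]].
  destruct (le_lt_dec n k) as [Hle|]; [exfalso|assumption].
  pose proof (Hclose y1 Hy1 n Hle) as Hd1.
  pose proof (Hclose y2 Hy2 n Hle) as Hd2.
  pose proof (metric_tri _ _ Hm (Nat.iter n T y1) (Nat.iter n T x0) (Nat.iter n T y2)).
  pose proof (metric_sym _ _ Hm (Nat.iter n T y1) (Nat.iter n T x0)). lra.
Qed.

Lemma S_T_shift (T : X -> X) (U V : X -> Prop) (delta : R) (j n : nat) :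
  (forall x, V x -> U (Nat.iter j T x)) -> (1 <= n)%nat ->
  S_T d T V delta (n + j) -> S_T d T U delta n.
Proof.
  intros HVU Hn [_ [x1 [x2 [Hx1 [Hx2 Hsep]]]]].
  split; [exact Hn|].
  exists (Nat.iter j T x1), (Nat.iter j T x2).
  split; [auto|]. split; [auto|].
  rewrite <- !Nat.iter_add. exact Hsep.
Qed.

Theorem multi_sensitive_thickly_sensitive (T : X -> X) :
  is_metric X d -> is_continuous d T -> is_surjective T ->
  multi_sensitive d T -> thickly_sensitive d T.
Proof.
  intros Hm HT Hs [delta [Hdelta Hmulti]].
  exists delta; split; [exact Hdelta|].
  intros U [HUo [x0 Hx0]] k.
  destruct (iter_uniformly_close T x0 (delta / 2) k HT ltac:(lra))
    as [r [Hr Hclose]].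
  set (ball := fun y => d x0 y < r).
  set (preimage j := fun x => U (Nat.iter j T x)).
  set (Us := ball :: map preimage (seq 0 (S k))).
  assert (HUs : forall W, In W Us -> opene d W).
  { intros W [<- | HW]; [exact (opene_ball x0 r Hm Hr)|].
    apply in_map_iff in HW. destruct HW as [j [<- _]]. split.
    - apply (open_preimage (Nat.iter j T)); [apply continuous_iter|]; assumption.
    - destruct (surjective_iter T j Hs x0) as [x Hx].
      exists x. unfold preimage. rewrite Hx. exact Hx0. }
  destruct (Hmulti Us ltac:(discriminate) HUs) as [n Hn].
  assert (Hkn : (k < n)%nat)
    by exact (S_T_late T ball x0 delta k n Hm Hclose (Hn ball (or_introl eq_refl))).
  exists (n - k)%nat. intros j Hj.
  assert (Hin : In (preimage (k - j)%nat) Us).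
  { right. apply in_map_iff. exists (k - j)%nat; split; [reflexivity|].
    apply in_seq. lia. }
  apply (S_T_shift T U (preimage (k - j)%nat) delta (k - j)); [auto | lia |].
  replace (n - k + j + (k - j))%nat with n by lia. exact (Hn _ Hin).
Qed.

Lemma transitive_uniform_hitting (T : X -> X) :
  is_continuous d T -> transitive d T ->
  forall Us : list (X -> Prop), (forall U, In U Us -> opene d U) ->
  forall W, opene d W ->
  exists V K, opene d V /\ (forall x, V x -> W x) /\
    forall U, In U Us ->
      exists t, (t <= K)%nat /\ forall x, V x -> U (Nat.iter t T x).
Proof.
  intros HT Htr Us. induction Us as [|U Us IH]; intros HUs W HW.
  - exists W, 0%nat. split; [exact HW|]. split; [auto|]. intros U [].
  - assert (HU : opene d U) by (apply HUs; left; reflexivity).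
    destruct (Htr W U HW HU) as [t [_ [x [HWx HUx]]]].
    set (W' := fun y => W y /\ U (Nat.iter t T y)).
    assert (HW' : opene d W').
    { split.
      - apply open_and; [apply HW|].
        apply (open_preimage (Nat.iter t T)); [apply continuous_iter | apply HU]; auto.
      - exists x; split; assumption. }
    destruct (IH (fun U' H => HUs U' (or_intror H)) W' HW')
      as [V [K [HV [HVW' HK]]]].
    exists V, (Nat.max t K). split; [exact HV|]. split.
    + intros y Hy; apply HVW'; exact Hy.
    + intros U' [<- | Hin].
      * exists t; split; [lia|]. intros y Hy. apply (HVW' y Hy).
      * destruct (HK U' Hin) as [t' [Ht' HV']]. exists t'; split; [lia | exact HV'].
Qed.

Theorem thickly_sensitive_multi_sensitive (T : X -> X) :
  is_continuous d T -> transitive d T ->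
  thickly_sensitive d T -> multi_sensitive d T.
Proof.
  intros HT Htr [delta [Hdelta Hthick]].
  exists delta; split; [exact Hdelta|].
  intros [|W Us] Hne HUs; [congruence|].
  destruct (transitive_uniform_hitting T HT Htr (W :: Us) HUs W
              (HUs W (or_introl eq_refl))) as [V [K [HV [_ HK]]]].
  destruct (Hthick V HV K) as [a Ha].
  assert (Ha1 : (1 <= a)%nat) by (destruct (Ha 0%nat (Nat.le_0_l _)); lia).
  exists a. intros U HU.
  destruct (HK U HU) as [t [HtK HVU]].
  exact (S_T_shift T U V delta t a HVU Ha1 (Ha t HtK)).
Qed.

End TopologicalDynamics.

Theorem proposition3p2 (X : Type) (d : X -> X -> R) (T : X -> X) :
  TDS d T ->
  (multi_sensitive d T -> thickly_sensitive d T) /\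
  (transitive d T -> (thickly_sensitive d T <-> multi_sensitive d T)).
Proof.
  intros [Hm [_ [HT Hs]]].
  assert (Hmulti_thick := multi_sensitive_thickly_sensitive X d T Hm HT Hs).
  split; [exact Hmulti_thick|].
  intros Htr; split; [|exact Hmulti_thick].
  exact (thickly_sensitive_multi_sensitive X d T HT Htr).
Qed.
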